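(* Let $A=(A,\wedge,\vee,\cdot,\to,1)$ be a $\mathsf{DLCMI}$ and $a,b\in A$. Then $(a,b)\in R(a,b)$, and $R(a,b)$ is a congruence of the lattice reduct $(A,\wedge,\vee)$ of $A$.
   Context: An algebra $(A,\wedge,\vee,\cdot,\to,1)$ of type $(2,2,2,2,0)$ is a $\mathsf{DLCMI}$ if for all $a,b,c\in A$: (1) $(A,\wedge,\vee)$ is a distributive lattice; (2) $1$ is its largest element; (3) $(A,\cdot,1)$ is a commutative monoid; (4) $(a\to b)\wedge(a\to c)=a\to(b\wedge c)$; (5) $(a\to c)\wedge(b\to c)=(a\vee b)\to c$; (6) $a\to a=1$; (7) $(a\vee b)\cdot c=(a\cdot c)\vee(b\cdot c)$; (8) $(a\to b)\cdot(b\to c)\le a\to c$; (9) $a\to b\le (a\cdot c)\to(b\cdot c)$. Notation: $x^0=1$, $x^{m}=x\cdot x^{m-1}$; $\square(x)=1\to x$, $\square^0(x)=x$, $\square^{m}$ the $m$-fold iterate; $x\leftrightarrow y=(x\to y)\wedge(y\to x)$; $t_n(a,b)=\square^0(a\leftrightarrow b)\wedge\square(a\leftrightarrow b)\wedge\cdots\wedge\square^n(a\leftrightarrow b)$; $t_n^k(a,b)=(t_n(a,b))^k$. $R(a,b)$ is the binary relation on $A$ with $(c,d)\in R(a,b)$ iff there exist natural numbers $n,k$ such that (C1) $t_n^k(a,b)\cdot(c\wedge a\wedge b)\le d\wedge a\wedge b$ and $t_n^k(a,b)\cdot(d\wedge a\wedge b)\le c\wedge a\wedge b$; (C2) $t_n^k(a,b)\cdot(c\vee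 a\vee b)\le d\vee a\vee b$ and $t_n^k(a,b)\cdot(d\vee a\vee b)\le c\vee a\vee b$; (C3) $t_n^k(a,b)\le c\leftrightarrow d$. *)

From Stdlib Require Import PeanoNat.

Record DLCMI := {
  car :> Type;
  meet : car -> car -> car;
  join : car -> car -> car;
  mul  : car -> car -> car;
  imp  : car -> car -> car;
  one  : car;
  meetC : forall x y, meet x y = meet y x;
  joinC : forall x y, join x y = join y x;
  meetA : forall x y z, meet x (meet y z) = meet (meet x y) z;
  joinA : forall x y z, join x (join y z) = join (join x y) z;
  meet_absorb : forall x y, meet x (join x y) = x;
  join_absorb : forall x y, join x (meet x y) = x;
  distr : forall x y z, meet x (join y z) = join (meet x y) (meet x z);
  le_one : forall x, meet x one = x;
  mulA : forall x y z, mul x (mul y z) = mul (mul x y) z;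
  mulC : forall x y, mul x y = mul y x;
  mul1 : forall x, mul x one = x;
  ax4 : forall x y z, meet (imp x y) (imp x z) = imp x (meet y z);
  ax5 : forall x y z, meet (imp x z) (imp y z) = imp (join x y) z;
  ax6 : forall x, imp x x = one;
  ax7 : forall x y z, mul (join x y) z = join (mul x z) (mul y z);
  ax8 : forall x y z, meet (mul (imp x y) (imp y z)) (imp x z) = mul (imp x y) (imp y z);
  ax9 : forall x y z, meet (imp x y) (imp (mul x z) (mul y z)) = imp x y
}.

Arguments meet {_}. Arguments join {_}. Arguments mul {_}. Arguments imp {_}.
Arguments one {_}.

Definition le {A : DLCMI} (x y : A) : Prop := meet x y = x.

Fixpoint pow {A : DLCMI} (x : A) (m : nat) : A :=
  match m with 0 => one | S m' => mul x (pow x m') end.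

Definition box {A : DLCMI} (x : A) : A := imp one x.
Definition boxn {A : DLCMI} (m : nat) (x : A) : A := Nat.iter m box x.

Definition biimp {A : DLCMI} (x y : A) : A := meet (imp x y) (imp y x).

Fixpoint tn {A : DLCMI} (n : nat) (a b : A) : A :=
  match n with
  | 0 => boxn 0 (biimp a b)
  | S n' => meet (tn n' a b) (boxn (S n') (biimp a b))
  end.

Definition tnk {A : DLCMI} (n k : nat) (a b : A) : A := pow (tn n a b) k.

Definition R {A : DLCMI} (a b : A) (c d : A) : Prop :=
  exists n k : nat,
    (le (mul (tnk n k a b) (meet c (meet a b))) (meet d (meet a b)) /\
     le (mul (tnk n k a b) (meet d (meet a b))) (meet c (meet a b))) /\
    (le (mul (tnk n k a b) (join c (join a b))) (join d (join a b)) /\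
     le (mul (tnk n k a b) (join d (join a b))) (join c (join a b))) /\
    le (tnk n k a b) (biimp c d).

Definition lattice_congruence {A : DLCMI} (Rel : A -> A -> Prop) : Prop :=
  (forall x, Rel x x) /\
  (forall x y, Rel x y -> Rel y x) /\
  (forall x y z, Rel x y -> Rel y z -> Rel x z) /\
  (forall x y x' y', Rel x y -> Rel x' y' -> Rel (meet x x') (meet y y')) /\
  (forall x y x' y', Rel x y -> Rel x' y' -> Rel (join x x') (join y y')).

(* Say that t certifies (c, d) when t·(c ∧ p) ≤ d ∧ p, t·(d ∧ p) ≤ c ∧ p, the same with
   ∨ q, and t ≤ c ↔ d.  Certification is stable under lowering t, symmetric, reflexive
   for every t, composable (t certifies (c, d) and s certifies (d, e) give t·s certifying
   (c, e), by axioms (8) and (9)) and compatible with ∧ and ∨ (by distributivity and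
   axioms (4), (5), (7)).  Hence "some member of a family certifies (c, d)" is a lattice
   congruence as soon as the family is directed under products, which the elements
   t_n^k(a, b) are: t_(n+n')^(k+k') ≤ t_n^k · t_n'^k'.  Finally t_0^1(a, b) = a ↔ b,
   and a, b both lie between a ∧ b and a ∨ b, so (a, b) is certified. *)
From Stdlib Require Import PeanoNat.

Section Lattice.
Context {A : DLCMI}.
Implicit Types x y z u v t s : A.

Lemma le_refl x : le x x.
Proof. unfold le. rewrite <- (join_absorb _ x x) at 2. apply meet_absorb. Qed.

Lemma le_trans x y z : le x y -> le y z -> le x z.
Proof. unfold le; intros Hxy Hyz. rewrite <- Hxy, <- meetA, Hyz. reflexivity. Qed.

Lemma le_join x y : le x y <-> join x y = y.
Proof.
  unfold le; split; intro H.
  - rewrite <- H, joinC, meetC. apply join_absorb.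
  - rewrite <- H. apply meet_absorb.
Qed.

Lemma le_meet_l x y : le (meet x y) x.
Proof. unfold le. rewrite (meetC _ x y), <- meetA, le_refl. reflexivity. Qed.

Lemma le_meet_r x y : le (meet x y) y.
Proof. unfold le. rewrite <- meetA, le_refl. reflexivity. Qed.

Lemma le_meet_glb x y z : le x y -> le x z -> le x (meet y z).
Proof. unfold le; intros Hy Hz. rewrite meetA, Hy, Hz. reflexivity. Qed.

Lemma le_join_l x y : le x (join x y).
Proof. apply meet_absorb. Qed.

Lemma le_join_r x y : le y (join x y).
Proof. rewrite joinC. apply le_join_l. Qed.

Lemma le_join_lub x y z : le x z -> le y z -> le (join x y) z.
Proof. rewrite !le_join; intros Hx Hy. rewrite <- joinA, Hy, Hx. reflexivity. Qed.

Lemma meet_idPr x y : le x y -> meet y x = x.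
Proof. intro H. rewrite meetC. exact H. Qed.

Lemma meetACA_r x y z : meet (meet x y) z = meet (meet x z) (meet y z).
Proof.
  rewrite <- (meetA _ x z), (meetC _ y z), (meetA _ z z y), le_refl, (meetC _ z y).
  symmetry. apply meetA.
Qed.

Lemma joinACA_r x y z : join (join x y) z = join (join x z) (join y z).
Proof.
  rewrite <- (joinA _ x z), (joinC _ y z), (joinA _ z z y).
  rewrite (proj1 (le_join z z) (le_refl z)), (joinC _ z y). symmetry. apply joinA.
Qed.

Lemma meet_join_distr_r x y z : meet (join x y) z = join (meet x z) (meet y z).
Proof. rewrite meetC, distr, (meetC _ z x), (meetC _ z y). reflexivity. Qed.

Lemma join_meet_distr_r x y z : join (meet x y) z = meet (join x z) (join y z).
Proof.
  rewrite distr, (meetC _ (join x z) z), (joinC _ x z), meet_absorb.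
  rewrite (meetC _ (join z x) y), distr, (joinC _ (meet y z) (meet y x)), <- joinA.
  rewrite (joinC _ (meet y z) z), (meetC _ y z), join_absorb, (meetC _ y x). reflexivity.
Qed.

Lemma le_mul_l x y z : le x y -> le (mul x z) (mul y z).
Proof. rewrite le_join; intro H. rewrite <- H, ax7. apply le_join_l. Qed.

Lemma le_mul x y u v : le x u -> le y v -> le (mul x y) (mul u v).
Proof.
  intros Hxu Hyv. apply le_trans with (mul u y); [now apply le_mul_l|].
  rewrite (mulC _ u y), (mulC _ u v). now apply le_mul_l.
Qed.

Lemma mul_le_l x y : le (mul x y) x.
Proof. rewrite <- (mul1 _ x) at 2. apply le_mul; [apply le_refl | apply le_one]. Qed.

Lemma mul_le_r x y : le (mul x y) y.
Proof. rewrite mulC. apply mul_le_l. Qed.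

Lemma mul_le_comp t s x y z :
  le (mul t x) y -> le (mul s y) z -> le (mul (mul t s) x) z.
Proof.
  intros Ht Hs. rewrite (mulC _ t s), <- mulA.
  apply le_trans with (mul s y); [apply le_mul; [apply le_refl | exact Ht] | exact Hs].
Qed.

Lemma mul_joinr t x y : mul t (join x y) = join (mul t x) (mul t y).
Proof. rewrite mulC, ax7, (mulC _ x), (mulC _ y). reflexivity. Qed.

Lemma mul_le_meet t x y u v :
  le (mul t x) u -> le (mul t y) v -> le (mul t (meet x y)) (meet u v).
Proof.
  intros Hx Hy. apply le_meet_glb.
  - apply le_trans with (mul t x); [apply le_mul; [apply le_refl | apply le_meet_l] | exact Hx].
  - apply le_trans with (mul t y); [apply le_mul; [apply le_refl | apply le_meet_r] | exact Hy].
Qed.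

Lemma mul_le_join t x y u v :
  le (mul t x) u -> le (mul t y) v -> le (mul t (join x y)) (join u v).
Proof.
  intros Hx Hy. rewrite mul_joinr. apply le_join_lub.
  - apply le_trans with u; [exact Hx | apply le_join_l].
  - apply le_trans with v; [exact Hy | apply le_join_r].
Qed.

Lemma le_imp2r x y z : le y z -> le (imp x y) (imp x z).
Proof. unfold le; intro H. rewrite ax4, H. reflexivity. Qed.

Lemma le_imp2l x y z : le x y -> le (imp y z) (imp x z).
Proof. rewrite le_join; intro H. unfold le. rewrite meetC, ax5, H. reflexivity. Qed.

Lemma le_biimp_imp x y : le (biimp x y) (imp x y).
Proof. apply le_meet_l. Qed.

Lemma le_biimp_imp_rev x y : le (biimp x y) (imp y x).
Proof. apply le_meet_r. Qed.

Lemma biimp_sym x y : biimp x y = biimp y x.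
Proof. apply meetC. Qed.

Lemma biimp_trans x y z : le (mul (biimp x y) (biimp y z)) (biimp x z).
Proof.
  apply le_meet_glb.
  - eapply le_trans; [|apply ax8].
    apply le_mul; [apply le_biimp_imp | apply le_biimp_imp].
  - eapply le_trans; [|apply (ax8 _ z y x)]. rewrite mulC.
    apply le_mul; [apply le_biimp_imp_rev | apply le_biimp_imp_rev].
Qed.

Lemma biimp_meet x y u v : le (meet (biimp x u) (biimp y v)) (biimp (meet x y) (meet u v)).
Proof.
  unfold biimp. rewrite <- !ax4. repeat apply le_meet_glb.
  - eapply le_trans; [apply le_meet_l|]. eapply le_trans; [apply le_meet_l|].
    apply le_imp2l, le_meet_l.
  - eapply le_trans; [apply le_meet_r|]. eapply le_trans; [apply le_meet_l|].
    apply le_imp2l, le_meet_r.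
  - eapply le_trans; [apply le_meet_l|]. eapply le_trans; [apply le_meet_r|].
    apply le_imp2l, le_meet_l.
  - eapply le_trans; [apply le_meet_r|]. eapply le_trans; [apply le_meet_r|].
    apply le_imp2l, le_meet_r.
Qed.

Lemma biimp_join x y u v : le (meet (biimp x u) (biimp y v)) (biimp (join x y) (join u v)).
Proof.
  unfold biimp. rewrite <- !ax5. repeat apply le_meet_glb.
  - eapply le_trans; [apply le_meet_l|]. eapply le_trans; [apply le_meet_l|].
    apply le_imp2r, le_join_l.
  - eapply le_trans; [apply le_meet_r|]. eapply le_trans; [apply le_meet_l|].
    apply le_imp2r, le_join_r.
  - eapply le_trans; [apply le_meet_l|]. eapply le_trans; [apply le_meet_r|].
    apply le_imp2r, le_join_l.
  - eapply le_trans; [apply le_meet_r|]. eapply le_trans; [apply le_meet_r|].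
    apply le_imp2r, le_join_r.
Qed.

End Lattice.

Section Certificates.
Context {A : DLCMI} (p q : A).
Implicit Types x y z t s c d e : A.

(* Laid out as the body of [R], so that [R a b] is convertible to
   [certified (meet a b) (join a b) (fun n k => tnk n k a b)] below. *)
Definition certifies t c d : Prop :=
  (le (mul t (meet c p)) (meet d p) /\ le (mul t (meet d p)) (meet c p)) /\
  (le (mul t (join c q)) (join d q) /\ le (mul t (join d q)) (join c q)) /\
  le t (biimp c d).

Lemma certifies_le s t c d : le s t -> certifies t c d -> certifies s c d.
Proof.
  intros Hst [[Hm1 Hm2] [[Hj1 Hj2] Hb]].
  repeat split; try (eapply le_trans; [apply le_mul_l, Hst | assumption]).
  eapply le_trans; eassumption.
Qed.

Lemma certifies_refl t c : certifies t c c.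
Proof.
  repeat split; try apply mul_le_r.
  apply le_meet_glb; rewrite ax6; apply le_one.
Qed.

Lemma certifies_sym t c d : certifies t c d -> certifies t d c.
Proof. unfold certifies. rewrite biimp_sym. tauto. Qed.

Lemma certifies_trans t s c d e :
  certifies t c d -> certifies s d e -> certifies (mul t s) c e.
Proof.
  intros [[Hm1 Hm2] [[Hj1 Hj2] Hb]] [[Gm1 Gm2] [[Gj1 Gj2] Gb]].
  repeat split.
  - eapply mul_le_comp; [exact Hm1 | exact Gm1].
  - rewrite (mulC _ t s). eapply mul_le_comp; [exact Gm2 | exact Hm2].
  - eapply mul_le_comp; [exact Hj1 | exact Gj1].
  - rewrite (mulC _ t s). eapply mul_le_comp; [exact Gj2 | exact Hj2].
  - eapply le_trans; [apply le_mul; [exact Hb | exact Gb] | apply biimp_trans].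
Qed.

Lemma certifies_meet t c d c' d' :
  certifies t c d -> certifies t c' d' -> certifies t (meet c c') (meet d d').
Proof.
  intros [[Hm1 Hm2] [[Hj1 Hj2] Hb]] [[Gm1 Gm2] [[Gj1 Gj2] Gb]].
  unfold certifies.
  rewrite (meetACA_r c c' p), (meetACA_r d d' p).
  rewrite (join_meet_distr_r c c' q), (join_meet_distr_r d d' q).
  repeat split; try (apply mul_le_meet; assumption).
  eapply le_trans; [apply le_meet_glb; [exact Hb | exact Gb] | apply biimp_meet].
Qed.

Lemma certifies_join t c d c' d' :
  certifies t c d -> certifies t c' d' -> certifies t (join c c') (join d d').
Proof.
  intros [[Hm1 Hm2] [[Hj1 Hj2] Hb]] [[Gm1 Gm2] [[Gj1 Gj2] Gb]].
  unfold certifies.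
  rewrite (meet_join_distr_r c c' p), (meet_join_distr_r d d' p).
  rewrite (joinACA_r c c' q), (joinACA_r d d' q).
  repeat split; try (apply mul_le_join; assumption).
  eapply le_trans; [apply le_meet_glb; [exact Hb | exact Gb] | apply biimp_join].
Qed.

Lemma certifies_between t c d :
  le p c -> le p d -> le c q -> le d q -> le t (biimp c d) -> certifies t c d.
Proof.
  intros Hpc Hpd Hcq Hdq Hb. unfold certifies.
  rewrite (meet_idPr _ _ Hpc), (meet_idPr _ _ Hpd).
  rewrite (proj1 (le_join _ _) Hcq), (proj1 (le_join _ _) Hdq).
  repeat split; try apply mul_le_r. exact Hb.
Qed.

End Certificates.

Section DirectedFamily.
Context {A : DLCMI} (p q : A) (f : nat -> nat -> A).
Hypothesis f_mul_directed :
  forall n1 k1 n2 k2, exists n k, le (f n k) (mul (f n1 k1) (f n2 k2)).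

Definition certified (c d : A) : Prop := exists n k, certifies p q (f n k) c d.

Lemma certified_congruence : lattice_congruence certified.
Proof.
  split; [|split; [|split; [|split]]].
  - intro c. exists 0, 0. apply certifies_refl.
  - intros c d [n [k H]]. exists n, k. now apply certifies_sym.
  - intros c d e [n1 [k1 H]] [n2 [k2 G]].
    destruct (f_mul_directed n1 k1 n2 k2) as [n [k Hle]].
    exists n, k. apply certifies_le with (1 := Hle).
    eapply certifies_trans; [exact H | exact G].
  - intros c d c' d' [n1 [k1 H]] [n2 [k2 G]].
    destruct (f_mul_directed n1 k1 n2 k2) as [n [k Hle]].
    exists n, k. apply certifies_meet.
    + apply certifies_le with (2 := H).
      apply le_trans with (1 := Hle), mul_le_l.
    + apply certifies_le with (2 := G).
      apply le_trans with (1 := Hle), mul_le_r.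
  - intros c d c' d' [n1 [k1 H]] [n2 [k2 G]].
    destruct (f_mul_directed n1 k1 n2 k2) as [n [k Hle]].
    exists n, k. apply certifies_join.
    + apply certifies_le with (2 := H).
      apply le_trans with (1 := Hle), mul_le_l.
    + apply certifies_le with (2 := G).
      apply le_trans with (1 := Hle), mul_le_r.
Qed.

End DirectedFamily.

Section Tn.
Context {A : DLCMI}.
Implicit Types x y a b : A.

Lemma pow_add x k m : pow x (k + m) = mul (pow x k) (pow x m).
Proof.
  induction k as [|k IHk]; simpl.
  - rewrite mulC, mul1. reflexivity.
  - rewrite IHk, mulA. reflexivity.
Qed.

Lemma le_pow x y k : le x y -> le (pow x k) (pow y k).
Proof. intro H. induction k; simpl; [apply le_refl | now apply le_mul]. Qed.

Lemma tn_le_add n m a b : le (tn (n + m) a b) (tn n a b).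
Proof.
  induction m as [|m IHm].
  - rewrite Nat.add_0_r. apply le_refl.
  - rewrite Nat.add_succ_r. simpl. eapply le_trans; [apply le_meet_l | exact IHm].
Qed.

Lemma tnk_mul_directed a b n1 k1 n2 k2 :
  exists n k, le (tnk n k a b) (mul (tnk n1 k1 a b) (tnk n2 k2 a b)).
Proof.
  exists (n1 + n2), (k1 + k2). unfold tnk. rewrite pow_add.
  apply le_mul; apply le_pow; [|rewrite Nat.add_comm]; apply tn_le_add.
Qed.

Lemma tnk_0_1 a b : tnk 0 1 a b = biimp a b.
Proof. apply mul1. Qed.

End Tn.

Theorem lemma3p6 (A : DLCMI) (a b : A) :
  R a b a b /\ lattice_congruence (R a b).
Proof.
  split.
  - exists 0, 1. apply certifies_between.
    + apply le_meet_l.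
    + apply le_meet_r.
    + apply le_join_l.
    + apply le_join_r.
    + rewrite tnk_0_1. apply le_refl.
  - apply (certified_congruence (meet a b) (join a b) (fun n k => tnk n k a b)).
    apply tnk_mul_directed.
Qed.
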